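(* Let $m,n\geq1$. The graph $\Gamma_m^n$ is bipartite with respect to the decomposition of its vertex set into the vertices $e_\lambda$ with $|\lambda|$ even and those with $|\lambda|$ odd. In particular, paths in $\Gamma_m^n$ of even length can only connect weights whose heights have the same parity, and paths of odd length can only connect weights whose heights have different parity.
   Context: A weight of type $(m,n)$ is a word $\lambda=\lambda_1\cdots\lambda_{m+n}$ in $\vee$ (''down'') and $\wedge$ (''up'') with $m$ letters $\vee$ and $n$ letters $\wedge$; $\Lambda_m^n$ is the set of weights. The height of $\lambda$ is $|\lambda|=\sum_{i:\lambda_i=\vee}\#\{j<i:\lambda_j=\wedge\}$. For $\lambda\in\Lambda_m^n$ let $\underline\lambda$ be the set of ''cups'' obtained by repeatedly pairing a $\vee$ with a $\wedge$ that are neighbours ($\vee$ on the left), ignoring positions already paired (positions on the line at which nested non-crossing lower semicircles are drawn); mirroring each cup above the line gives the closed circles of the degree-zero arc diagram $e_\lambda$. $\Gamma_m^n$ is the simple undirected graph with vertex set $\{e_\lambda\}_{\lambda\in\Lambda_m^n}$ and an edge between $e_\lambda$ and $e_\mu$ if one of $\lambda,\mu$ is obtained from the other by exchanging the labels at the two endpoints of one cup (i.e. of a $\vee\cdots\wedge$ pair lying on a single circle of $e_\lambda$, resp. $e_\mu$). *)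

From mathcomp Require Import all_boot.
Set Implicit Arguments. Unset Strict Implicit. Unset Printing Implicit Defensive.

(* Convention: a letter is a bool; [true] = "down" (\vee), [false] = "up" (\wedge).
   Positions on the line are numbered 0, 1, ..., m+n-1. *)

Definition weight (m n : nat) := {t : (m + n).-tuple bool | count id t == m}.

Definition word {m n} (x : weight m n) : seq bool := tval (sval x).

Definition height (s : seq bool) : nat :=
  \sum_(i < size s | nth false s i) count negb (take i s).

(* One step of the cup construction: [u] lists the still unpaired positions
   (with their labels) from left to right; find the leftmost \vee whose
   neighbour (among unpaired positions) to the right is a \wedge, pair them,
   and remove both from the list of unpaired positions. *)
Fixpoint pair_step (u : seq (nat * bool)) : option ((nat * nat) * seq (nat * bool)) :=
  match u with
  | [::] => None
  | x :: t =>
      if x.2 && (if t is y :: _ then ~~ y.2 else false)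
      then Some ((x.1, (head x t).1), behead t)
      else omap (fun p => (p.1, x :: p.2)) (pair_step t)
  end.

Fixpoint cups_iter (k : nat) (u : seq (nat * bool)) (acc : seq (nat * nat)) :=
  match k with
  | 0 => acc
  | k'.+1 =>
      match pair_step u with
      | Some (c, r) => cups_iter k' r (c :: acc)
      | None => acc
      end
  end.

(* the set of cups of underline(lambda): pairs (i, j), i < j, lambda_i = \vee, lambda_j = \wedge *)
Definition cups (s : seq bool) : seq (nat * nat) :=
  cups_iter (size s) (zip (iota 0 (size s)) s) [::].

Definition swap_at (s : seq bool) (c : nat * nat) : seq bool :=
  set_nth false (set_nth false s c.1 (nth false s c.2)) c.2 (nth false s c.1).

Definition adj (s t : seq bool) : bool :=
  has (fun c => t == swap_at s c) (cups s) || has (fun c => s == swap_at t c) (cups t).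

Definition Gamma_edge (m n : nat) : rel (weight m n) :=
  fun x y => adj (word x) (word y).

From mathcomp Require Import all_boot zify.

Set Implicit Arguments.
Unset Strict Implicit.
Unset Printing Implicit Defensive.

(* Exchanging a \vee at position i with a \wedge at position j > i raises the
   height by j - i.  Every cup joins two positions of different parity: the
   still unpaired positions, read from left to right, alternate in parity (this
   holds initially, and removing two neighbours preserves it), and each cup
   joins two such neighbours.  Hence every edge of Gamma_m^n changes the parity
   of the height. *)

Lemma sum_const_nth (s : seq bool) (c : nat) :
  \sum_(i < size s | nth false s i) c = c * count id s.
Proof.
elim: s => [|b s IH]; first by rewrite big_ord0 muln0.
rewrite big_mkcond (big_ord_recl (size s)) /= -big_mkcond /= IH.
by case: b => /=; lia.
Qed.

Lemma height_nil : height [::] = 0.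
Proof. by rewrite /height big_ord0. Qed.

Lemma height_cons b s : height (b :: s) = height s + (~~ b) * count id s.
Proof.
rewrite /height big_mkcond (big_ord_recl (size s)) -big_mkcond /=.
rewrite big_split /= sum_const_nth.
under eq_bigl => i do rewrite add0n.
under eq_bigr => i _ do rewrite add0n.
by case: b => /=; lia.
Qed.

Lemma height_cat s t :
  height (s ++ t) = height s + height t + count id t * count negb s.
Proof.
elim: s => [|x s IH]; first by rewrite height_nil muln0 addn0.
by rewrite cat_cons !height_cons IH count_cat; case: x => /=; nia.
Qed.

Lemma height_swap a b c :
  height (a ++ false :: b ++ true :: c) =
  height (a ++ true :: b ++ false :: c) + (size b).+1.
Proof.
rewrite !height_cat !(height_cons _ (_ ++ _)) !height_cat !height_cons /=.
rewrite !count_cat /=.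
have : count id b + count negb b = size b by rewrite -(count_predC id b).
nia.
Qed.

Lemma set_nth_size_cat (T : Type) (x0 : T) a y r z :
  set_nth x0 (a ++ y :: r) (size a) z = a ++ z :: r.
Proof. by elim: a => [|x a IH] //=; rewrite IH. Qed.

Lemma swap_at_cat a x b y c :
  swap_at (a ++ x :: b ++ y :: c) (size a, size a + (size b).+1) =
  a ++ y :: b ++ x :: c.
Proof.
have nth_y : nth false (a ++ x :: b ++ y :: c) (size a + (size b).+1) = y.
  by rewrite nth_cat ltnNge leq_addr /= addKn /= nth_cat ltnn subnn.
rewrite /swap_at /= nth_y nth_cat ltnn subnn /= set_nth_size_cat.
have -> : size a + (size b).+1 = size (a ++ y :: b) by rewrite size_cat.
by rewrite -cat_cons catA set_nth_size_cat -catA.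
Qed.

Lemma split_nth2 (T : Type) (x0 : T) (s : seq T) i j : i < j -> j < size s ->
  exists a b c, [/\ s = a ++ nth x0 s i :: b ++ nth x0 s j :: c,
                    size a = i & j = size a + (size b).+1].
Proof.
move=> lt_ij lt_js.
exists (take i s), (take (j - i.+1) (drop i.+1 s)), (drop j.+1 s).
rewrite size_takel ?size_takel ?size_drop; try lia.
split; last lia; last done.
rewrite -{1}(cat_take_drop i s) (drop_nth x0 (ltn_trans lt_ij lt_js)).
congr (_ ++ _ :: _).
rewrite -(drop_nth x0 lt_js) -[in LHS](cat_take_drop (j - i.+1) (drop i.+1 s)).
by rewrite drop_drop (_ : j - i.+1 + i.+1 = j) //; lia.
Qed.

Lemma odd_height_swap_at s i j :
  i < j -> j < size s -> nth false s i -> ~~ nth false s j -> odd (j - i) ->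
  odd (height (swap_at s (i, j))) != odd (height s).
Proof.
move=> lt_ij lt_js si sj.
have [a [b [c [def_s <- ->]]]] := split_nth2 false lt_ij lt_js.
rewrite si (negbTE sj) in def_s.
by rewrite def_s swap_at_cat height_swap oddD addKn => ->; case: odd.
Qed.

Definition alt_lt (e1 e2 : nat * bool) := (e1.1 < e2.1) && (odd e1.1 != odd e2.1).

Definition labelled (s : seq bool) (e : nat * bool) :=
  (e.1 < size s) && (nth false s e.1 == e.2).

Definition odd_down_up (s : seq bool) (c : nat * nat) :=
  [&& c.1 < c.2, c.2 < size s, nth false s c.1, ~~ nth false s c.2 & odd (c.2 - c.1)].

Lemma pair_step_path z u c r :
  pair_step u = Some (c, r) -> path alt_lt z u -> path alt_lt z r.
Proof.
elim: u z c r => [|x t IH] z c r //=.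
case: ifP => _.
  case: t {IH} => [|y [|w t]] //= [_ <-] //.
  case/and4P => /andP [zx pzx] /andP [xy pxy] /andP [yw pyw] pwt.
  rewrite /= pwt andbT /alt_lt (ltn_trans zx (ltn_trans xy yw)) /=.
  by move: pzx pxy pyw; case: (odd z.1); case: (odd x.1); case: (odd y.1).
case e: (pair_step t) => [[c' r']|] //= [_ <-] /andP [zx /(IH _ _ _ e) xr].
by rewrite /= zx xr.
Qed.

Lemma pair_step_sorted u c r :
  pair_step u = Some (c, r) -> sorted alt_lt u -> sorted alt_lt r.
Proof.
case: u => [|x t] //=; case: ifP => _.
  by case: t => [|y t] //= [_ <-] // /andP [_ /path_sorted].
case e: (pair_step t) => [[c' r']|] //= [_ <-].
exact: pair_step_path e.
Qed.

Lemma pair_step_subset u c r : pair_step u = Some (c, r) -> {subset r <= u}.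
Proof.
elim: u c r => [|x t IH] c r //=; case: ifP => _.
  by case=> _ <- w /mem_behead wt; rewrite inE wt orbT.
case e: (pair_step t) => [[c' r']|] //= [_ <-] w.
by rewrite !inE => /predU1P [-> | /(IH _ _ e) ->]; rewrite ?eqxx ?orbT.
Qed.

Lemma pair_step_odd_down_up s u c r : pair_step u = Some (c, r) ->
  sorted alt_lt u -> all (labelled s) u -> odd_down_up s c.
Proof.
elim: u c r => [|x t IH] c r //=; case: ifP => [/andP [x_down t_up] | _].
  case: t {IH} t_up => [|y t] //= y_up [<- _] /andP [/andP [xy pxy] _].
  case/and3P => /andP [_ /eqP sx] /andP [ys /eqP sy] _.
  rewrite /odd_down_up /= xy ys sx sy x_down y_up (oddB (ltnW xy)).
  by rewrite addbC -negb_eqb pxy.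
case e: (pair_step t) => [[c' r']|] //= [<- _] /path_sorted t_sorted /andP [_].
exact: IH e t_sorted.
Qed.

Lemma cups_iter_odd_down_up s k u acc :
  sorted alt_lt u -> all (labelled s) u -> all (odd_down_up s) acc ->
  all (odd_down_up s) (cups_iter k u acc).
Proof.
elim: k u acc => [|k IH] u acc //= u_sorted u_labelled acc_ok.
case e: (pair_step u) => [[c r]|] //.
apply: IH; first exact: pair_step_sorted e u_sorted.
  by apply/allP => w /(pair_step_subset e); apply/allP.
by rewrite /= acc_ok (pair_step_odd_down_up e u_sorted u_labelled).
Qed.

Lemma path_alt_lt_zip_iota k b (s : seq bool) :
  path alt_lt (k, b) (zip (iota k.+1 (size s)) s).
Proof.
elim: s k b => [|b' s IH] k b //=.
by rewrite IH /alt_lt /= ltnSn /= andbT; case: (odd k).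
Qed.

Lemma all_labelled_zip_iota s : all (labelled s) (zip (iota 0 (size s)) s).
Proof.
apply/allP => e /nthP => /(_ (0, false)) [i].
rewrite size_zip size_iota minnn => lt_is <-.
by rewrite nth_zip ?size_iota // nth_iota // /labelled /= add0n lt_is eqxx.
Qed.

Lemma cups_odd_down_up s : all (odd_down_up s) (cups s).
Proof.
rewrite /cups; apply: cups_iter_odd_down_up => //; last exact: all_labelled_zip_iota.
by case: s => //= b s; exact: path_alt_lt_zip_iota.
Qed.

Lemma odd_height_swap_cup s c :
  c \in cups s -> odd (height (swap_at s c)) != odd (height s).
Proof.
move/(allP (cups_odd_down_up s)); case: c => i j /and5P [/= ij js si sj odd_ji].
exact: odd_height_swap_at.
Qed.

Lemma odd_height_adj s t : adj s t -> odd (height s) != odd (height t).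
Proof.
case/orP => /hasP [c c_cup /eqP ->]; last exact: odd_height_swap_cup.
by rewrite eq_sym; exact: odd_height_swap_cup.
Qed.

Lemma path_flip_last (T : Type) (e : rel T) (f : T -> bool) :
  (forall x y, e x y -> f x != f y) ->
  forall x p, path e x p -> f (last x p) = f x (+) odd (size p).
Proof.
move=> e_flip x p; elim: p x => [|y p IH] x /=; first by rewrite addbF.
case/andP => /e_flip + /IH ->.
by case: (f x); case: (f y); case: odd.
Qed.

Theorem proposition2p6 (m n : nat) (hm : 1 <= m) (hn : 1 <= n) :
  (forall x y : weight m n, Gamma_edge x y ->
     odd (height (word x)) != odd (height (word y))) /\
  (forall (x : weight m n) (p : seq (weight m n)), path (@Gamma_edge m n) x p ->
     odd (height (word (last x p))) = odd (height (word x)) (+) odd (size p)).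
Proof.
have edge_flip (x y : weight m n) : Gamma_edge x y ->
    odd (height (word x)) != odd (height (word y)).
  exact: odd_height_adj.
by split; last exact: path_flip_last.
Qed.
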